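(* Let $\ell\ge1$ and $V=\prod_{j=\ell,\dots,2,1}(c_1x^jy^jc_2)^2$. Suppose $C$ is an accepting computation of $V$ that does not completely match the first occurrence of the subword $v_\ell=c_1x^\ell y^\ell c_2$ of $V$ with the second occurrence of $v_\ell$ (i.e., at least one symbol of the second occurrence of $v_\ell$ is pushed onto the queue). Then at some point during $C$ the queue contains two full $x$-blocks or two full $y$-blocks.
   Context: Queue automaton: a configuration is written $Q\,\|\,x$ ($Q$ = queue contents, $x$ = remaining input); a step from $Q\,\|\,\sigma x$ ($\sigma$ a symbol) goes either to $Q\sigma\,\|\,x$ (push the input symbol) or, if $Q=\sigma Q'$, to $Q'\,\|\,x$ (the input symbol is matched against the leftmost queue symbol, which is popped; that queue symbol was pushed from an earlier input position and the two occurrences are said to be matched). An accepting computation of $w$ is a computation $\varepsilon\,\|\,w\vdash^*\varepsilon\,\|\,\varepsilon$ ($\varepsilon$ the empty string). Here $c_1,c_2,x,y$ are four distinct symbols and $V=v_\ell v_\ell v_{\ell-1}v_{\ell-1}\cdots v_1v_1$ with $v_j=c_1x^jy^jc_2$. Each displayed subword $x^j$ of $V$ is an $x$-block and each displayed $y^j$ a $y$-block. At a given point of a computation, the queue contains a full $x$-block (resp. $y$-block) if the entire block $x^j$ (resp. $y^j$) of $V$ has been pushed onto the queue, with none of its symbols matched when read, and none of its symbols has yet been popped. *)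

From HB Require Import structures.
From mathcomp Require Import all_boot.
Set Implicit Arguments. Unset Strict Implicit. Unset Printing Implicit Defensive.

Inductive sym := c1 | c2 | sx | sy.

Definition sym_eqb (a b : sym) : bool :=
  match a, b with
  | c1, c1 | c2, c2 | sx, sx | sy, sy => true
  | _, _ => false
  end.

Lemma sym_eqP : Equality.axiom sym_eqb.
Proof. by case; case; constructor. Qed.

HB.instance Definition _ := hasDecEq.Build sym sym_eqP.

Definition vword (j : nat) : seq sym := c1 :: nseq j sx ++ nseq j sy ++ [:: c2].

Definition factors (l : nat) : seq nat :=
  flatten [seq [:: j; j] | j <- rev (iota 1 l)].

Definition Vword (l : nat) : seq sym := flatten [seq vword j | j <- factors l].

(* position (0-based) in V where the k-th factor (0-based) starts *)
Definition foff (l k : nat) : nat := sumn [seq size (vword j) | j <- take k (factors l)].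

Definition xblock (l k : nat) : seq nat :=
  iota (foff l k).+1 (nth 0 (factors l) k).
Definition yblock (l k : nat) : seq nat :=
  iota ((foff l k).+1 + nth 0 (factors l) k) (nth 0 (factors l) k).

(* Queue automaton configurations, annotated with input positions:
   (Q, n) stands for the configuration  map (nth c1 w) Q || drop n w ,
   where Q lists the input positions whose symbols are in the queue
   (leftmost first) and n is the number of input symbols already read. *)
Definition config := (seq nat * nat)%type.

Definition qstep (w : seq sym) (c d : config) : bool :=
  let: (Q, n) := c in
  (n < size w) &&
  ((d == (rcons Q n, n.+1))
   || (match Q with
       | j :: Q' => (nth c1 w j == nth c1 w n) && (d == (Q', n.+1))
       | [::] => false
       end)).

Definition init_config : config := ([::], 0).

(* cs is the list of configurations after the initial one *)
Definition accepting_computation (w : seq sym) (cs : seq config) : bool :=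
  path (qstep w) init_config cs && (last init_config cs == ([::], size w)).

Definition full_block (c : config) (b : seq nat) : Prop := {subset b <= c.1}.

From mathcomp Require Import all_boot zify.
Set Implicit Arguments. Unset Strict Implicit.

(* Record, for every time t, the queue as the list of input positions it holds.
   If the first k+1 queue entries contain more copies of some symbol than the
   input read before time m, fewer than k+1 entries can be popped before m, and
   every input symbol occurring nowhere among those entries is pushed.

   Applied to the leading c1, this shows that the first v_l is pushed whole.  If
   the second c1 is pushed as well, the queue holds both x-blocks.  Otherwise the
   c1's are matched and the second v_l is matched against the first one up to its
   first pushed symbol.  If that symbol is an x, the x's of the first v_l left at
   the front outnumber those still to be read, so both y-blocks get queued.  If it
   is a y, a y still heads the queue when the second c2 is read; either way both
   c2's end up queued while no x is.  As only one c2 is read before the fourth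
   x-block, the x-blocks of both copies of v_(l-1) are then pushed and stay. *)

Section QueueHistory.

Variables (w : seq sym) (N : nat) (Q : nat -> seq nat).
Hypothesis queue_init : Q 0 = [::].
Hypothesis queue_step : forall t, t < N -> Q t.+1 = rcons (Q t) t \/
  exists j Q', [/\ Q t = j :: Q', nth c1 w j = nth c1 w t & Q t.+1 = Q'].

Definition pushed t := size (Q t.+1) == (size (Q t)).+1.

Lemma queue_push t : t < N -> pushed t -> Q t.+1 = rcons (Q t) t.
Proof.
move=> tN; rewrite /pushed; case: (queue_step tN) => // [[j [Q' [-> _ ->]]]].
by rewrite /=; lia.
Qed.

Lemma queue_pop t : t < N -> ~~ pushed t ->
  exists j Q', [/\ Q t = j :: Q', nth c1 w j = nth c1 w t & Q t.+1 = Q'].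
Proof.
by move=> tN; rewrite /pushed; case: (queue_step tN) => // ->; rewrite size_rcons eqxx.
Qed.

Lemma mem_queue t p : t <= N -> p \in Q t -> p < t /\ pushed p.
Proof.
elim: t => [|t IH] tN; first by rewrite queue_init.
have [pt | pt] := boolP (pushed t).
  rewrite (queue_push tN pt) mem_rcons inE => /orP [/eqP -> //|].
  by move=> /(IH (ltnW tN)) [? ?]; split=> //; lia.
have [j [Q' [Qt _ ->]]] := queue_pop tN pt => pQ'.
have /(IH (ltnW tN)) [? ?] : p \in Q t by rewrite Qt inE pQ' orbT.
by split=> //; lia.
Qed.

(* A position enters the queue only at its own time and never comes back once
   popped. *)
Lemma mem_queue_earlier p t t' : p < t <= t' -> t' <= N -> p \in Q t' -> p \in Q t.
Proof.
move=> /andP [pt]; elim: t' => [|t' IH] tt' t'N; first by have -> : t = 0 by lia.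
have [-> // | ne] := eqVneq t t'.+1.
have {}tt' : t <= t' by lia.
have [pt' | pt'] := boolP (pushed t').
  rewrite (queue_push t'N pt') mem_rcons inE => /orP [/eqP pE|]; first lia.
  exact: IH tt' (ltnW t'N).
have [j [Q' [Qt' _ ->]]] := queue_pop t'N pt' => pQ'.
by apply: IH tt' (ltnW t'N) _; rewrite Qt' inE pQ' orbT.
Qed.

Lemma queue_only_pops n t : n <= t <= N -> (forall t', n <= t' < t -> ~~ pushed t') ->
  Q t = drop (t - n) (Q n).
Proof.
elim: t => [|t IH] /andP [nt tN] pops.
  by rewrite (_ : n = 0) ?drop0 //; lia.
have [-> | ne] := eqVneq n t.+1; first by rewrite subnn drop0.
have [j [Q' [Qt _ ->]]] := queue_pop tN (pops t (ltac:(lia))).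
have := IH (ltac:(lia)) (fun t' h => pops t' (ltac:(lia))).
rewrite Qt (_ : t.+1 - n = (t - n).+1); last by lia.
by move=> Qn; rewrite -add1n -drop_drop -Qn /= drop0.
Qed.

Local Notation symbols X := (map (nth c1 w) X).

Lemma iota_window n m : n <= m -> iota n (m.+1 - n) = iota n (m - n) ++ [:: m].
Proof. by move=> nm; rewrite (_ : m.+1 - n = m - n + 1) ?iotaD ?subnKC //; lia. Qed.

Lemma queue_blocked n m j Qn : n <= m <= N -> Q n = j :: Qn ->
  {in iota n (m - n), forall t, nth c1 w t != nth c1 w j} -> Q m = Q n ++ iota n (m - n).
Proof.
move=> + Qn_def; elim: m => [|m IH] /andP [nm mN] other.
  by rewrite (_ : n = 0) ?cats0 //; lia.
have [<- | ne] := eqVneq n m.+1; first by rewrite subnn cats0.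
have {ne}nm : n <= m by lia.
have m_in : m \in iota n (m.+1 - n) by rewrite iota_window // mem_cat mem_seq1 eqxx orbT.
have Qm : Q m = Q n ++ iota n (m - n).
  by apply: IH => [|t t_in]; [lia | apply: other; rewrite iota_window // mem_cat t_in].
have pm : pushed m.
  apply: contraT => pm; have [i [Q' [Qm' sym_i _]]] := queue_pop mN pm.
  move: Qm'; rewrite Qm Qn_def => -[ji _].
  by have := other m m_in; rewrite ji sym_i eqxx.
by rewrite (queue_push mN pm) Qm iota_window // catA cats1.
Qed.

(* Every entry popped from [take d (Q n)] was matched against an input symbol of
   the window, so the popped prefix contains no more [s] than the window; since
   the first [k.+1] entries contain more, at most [k] of them are popped. *)
Lemma queue_window_matched n m k s : n <= m <= N -> k < size (Q n) ->
  count_mem s (symbols (iota n (m - n))) < count_mem s (symbols (take k.+1 (Q n))) ->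
  exists d, [/\ d <= k, Q m = drop d (Q n) ++ [seq t <- iota n (m - n) | pushed t] &
    count_mem s (symbols (take d (Q n))) <= count_mem s (symbols (iota n (m - n)))].
Proof.
elim: m => [|m IH] /andP [nm mN] kQ few.
  by exists 0; rewrite (_ : n = 0) ?drop0 ?cats0 ?take0 //; lia.
have [<- | ne] := eqVneq n m.+1.
  by exists 0; rewrite subnn drop0 cats0 take0.
have {ne}nm : n <= m by lia.
have few_m : count_mem s (symbols (iota n (m - n))) < count_mem s (symbols (take k.+1 (Q n))).
  by apply: leq_ltn_trans few; rewrite iota_window // map_cat count_cat leq_addr.
have [d [dk Qm popped]] := IH (ltac:(lia)) kQ few_m.
rewrite iota_window // filter_cat map_cat count_cat /= addn0.
have [pm | pm] := boolP (pushed m).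
  exists d; split=> //; last exact: leq_trans popped (leq_addr _ _).
  by rewrite (queue_push mN pm) Qm -cats1 catA.
have [j [Q' [Qm' sym_j ->]]] := queue_pop mN pm.
have dQ : d < size (Q n) by lia.
move: Qm'; rewrite Qm (drop_nth 0 dQ) /= => -[jE Q'E].
have popped' : count_mem s (symbols (take d.+1 (Q n))) <=
               count_mem s (symbols (iota n (m - n))) + (nth c1 w m == s).
  by rewrite (take_nth 0 dQ) map_rcons -cats1 count_cat /= addn0 jE sym_j leq_add2r.
exists d.+1; split; rewrite ?cats0 ?Q'E //.
rewrite ltnNge; apply/negP => kd; move: few; apply/negP; rewrite -leqNgt.
rewrite iota_window // map_cat count_cat /= addn0; apply: leq_trans popped'.
apply/leq_count_subseq/map_subseq.
by rewrite -(@take_takel _ k.+1 d.+1 (Q n) kd) take_subseq.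
Qed.

Lemma queue_window n m k s : n <= m <= N -> k < size (Q n) ->
  count_mem s (symbols (iota n (m - n))) < count_mem s (symbols (take k.+1 (Q n))) ->
  exists2 d, d <= k & Q m = drop d (Q n) ++ [seq t <- iota n (m - n) | pushed t] /\
    forall t, n <= t < m -> nth c1 w t \notin symbols (take k.+1 (Q n)) -> pushed t.
Proof.
move=> nmN kQ few; have /andP [nm mN] := nmN.
have [d [dk Qm _]] := queue_window_matched nmN kQ few.
exists d => //; split=> // t /andP [nt tm]; apply: contraNT => pt.
have tN : t < N by lia.
have [j [Q' [Qt <- _]]] := queue_pop tN pt.
have few_t : count_mem s (symbols (iota n (t - n))) < count_mem s (symbols (take k.+1 (Q n))).
  apply: leq_ltn_trans few.
  by rewrite (_ : m - n = (t - n) + (m - t)) ?iotaD ?map_cat ?count_cat ?leq_addr //; lia.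
have ntN : n <= t <= N by lia.
have [e [ek Qt' _]] := queue_window_matched ntN kQ few_t.
have eQ : e < size (Q n) by lia.
move: Qt; rewrite Qt' (drop_nth 0 eQ) => -[<- _].
by apply: map_f; rewrite -(nth_take 0 (ltac:(lia) : e < k.+1)) mem_nth // size_takel.
Qed.

End QueueHistory.

Lemma count_mem_map0 (T U : eqType) (f : T -> U) (u : U) (X : seq T) :
  {in X, forall x, f x != u} -> count_mem u (map f X) = 0.
Proof. by move=> fX; apply/count_memPn/mapP => -[x /fX fx fxE]; rewrite fxE eqxx in fx. Qed.

Lemma count_mem_map_all (T U : eqType) (f : T -> U) (u : U) (X : seq T) :
  {in X, forall x, f x = u} -> count_mem u (map f X) = size X.
Proof.
by move=> fX; apply/eqP; rewrite -(size_map f) -all_count all_map; apply/allP => x /fX /= ->.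
Qed.

Lemma size_vword j : size (vword j) = j.*2.+2.
Proof. by rewrite /= !size_cat !size_nseq /= addn1 addnS -addnn. Qed.

Lemma factors_S n : factors n.+1 = n.+1 :: n.+1 :: factors n.
Proof.
rewrite /factors (_ : iota 1 n.+1 = rcons (iota 1 n) n.+1) ?rev_rcons //.
by rewrite -cats1 -(addn1 n) iotaD (addnC 1 n).
Qed.

Lemma Vword_S n : Vword n.+1 = vword n.+1 ++ vword n.+1 ++ Vword n.
Proof. by rewrite /Vword factors_S. Qed.

Lemma size_Vword_S n : size (Vword n.+1) = n.+1.*2.+2 + n.+1.*2.+2 + size (Vword n).
Proof. by rewrite Vword_S !size_cat !size_vword addnA. Qed.

Lemma nth_vword0 j : nth c1 (vword j) 0 = c1.
Proof. by []. Qed.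

Lemma nth_vword_x j p : 0 < p <= j -> nth c1 (vword j) p = sx.
Proof.
by case: p => // p /andP [_ p_le]; rewrite /vword /= nth_cat size_nseq p_le nth_nseq p_le.
Qed.

Lemma nth_vword_y j p : j < p <= j.*2 -> nth c1 (vword j) p = sy.
Proof.
case: p => [|p] p_lt; first by lia.
rewrite /vword /= nth_cat size_nseq ifN; last by lia.
rewrite nth_cat size_nseq ifT; last by lia.
by rewrite nth_nseq ifT //; lia.
Qed.

Lemma nth_vword_c2 j : nth c1 (vword j) j.*2.+1 = c2.
Proof.
rewrite /vword /= nth_cat size_nseq ifN; last by lia.
by rewrite nth_cat size_nseq ifN; [have -> : j.*2 - j - j = 0 by lia|lia].
Qed.

Lemma nth_vword_neq_x j p : (p == 0) || (j < p) -> nth c1 (vword j) p != sx.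
Proof.
case: p => [|p] p_lt //.
rewrite /vword /= nth_cat size_nseq ifN; last by lia.
rewrite nth_cat size_nseq; case: ifP => _; first by rewrite nth_nseq; case: ifP.
by case: (p - j - j) => [|[]].
Qed.

Lemma nth_vword_neq_c1 j p : 0 < p <= j.*2.+1 -> nth c1 (vword j) p != c1.
Proof.
case: p => [|p] p_lt //.
rewrite /vword /= nth_cat size_nseq; case: ifP => p_x; first by rewrite nth_nseq p_x.
rewrite nth_cat size_nseq; case: ifP => p_y; first by rewrite nth_nseq p_y.
by have -> : p - j - j = 0 by lia.
Qed.

Lemma nth_vword_neq_c2 j p : p <= j.*2 -> nth c1 (vword j) p != c2.
Proof.
case: p => [|p] p_lt //.
rewrite /vword /= nth_cat size_nseq; case: ifP => p_x; first by rewrite nth_nseq p_x.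
rewrite nth_cat size_nseq; case: ifP => p_y; first by rewrite nth_nseq p_y.
lia.
Qed.

Opaque vword.

Lemma nth_Vword_first n p : 0 < n -> p < n.*2.+2 -> nth c1 (Vword n) p = nth c1 (vword n) p.
Proof. by case: n => // n _ pn; rewrite Vword_S nth_cat size_vword pn. Qed.

Lemma nth_Vword_second n p : 0 < n -> n.*2.+2 <= p < (n.*2.+2).*2 ->
  nth c1 (Vword n) p = nth c1 (vword n) (p - n.*2.+2).
Proof.
case: n => // n _ pn; rewrite Vword_S nth_cat size_vword ifN; last by lia.
by rewrite nth_cat size_vword ifT //; lia.
Qed.

Lemma nth_Vword_rest n p : (n.+1.*2.+2).*2 <= p ->
  nth c1 (Vword n.+1) p = nth c1 (Vword n) (p - (n.+1.*2.+2).*2).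
Proof.
move=> pn; rewrite Vword_S nth_cat size_vword ifN; last by lia.
rewrite nth_cat size_vword ifN; last by lia.
by congr nth; lia.
Qed.

Lemma foff1 l : foff l.+1 1 = l.+1.*2.+2.
Proof. by rewrite /foff factors_S /= size_vword ?addn0. Qed.

Lemma foff2 l : foff l.+1 2 = l.+1.*2.+2 + l.+1.*2.+2.
Proof. by rewrite /foff factors_S /= size_vword take0 /= addn0. Qed.

Lemma xblock0 l : xblock l.+1 0 = iota 1 l.+1.
Proof. by rewrite /xblock /foff factors_S. Qed.

Lemma xblock1 l : xblock l.+1 1 = iota (l.+1.*2.+2).+1 l.+1.
Proof. by rewrite /xblock foff1 factors_S. Qed.

Lemma yblock0 l : yblock l.+1 0 = iota (1 + l.+1) l.+1.
Proof. by rewrite /yblock /foff factors_S. Qed.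

Lemma yblock1 l : yblock l.+1 1 = iota ((l.+1.*2.+2).+1 + l.+1) l.+1.
Proof. by rewrite /yblock foff1 factors_S. Qed.

Lemma xblock2 l : xblock l.+1 2 = iota (l.+1.*2.+2 + l.+1.*2.+2).+1 l.
Proof. by rewrite /xblock foff2 factors_S /=; case: l => // l; rewrite factors_S. Qed.

Lemma xblock3 l : xblock l.+1 3 = iota (l.+1.*2.+2 + l.+1.*2.+2 + l.*2.+2).+1 l.
Proof.
rewrite /xblock /foff factors_S; case: l => [|l] //.
by rewrite factors_S /= !size_vword addn0 addnA.
Qed.

Definition cfg (cs : seq config) t := nth init_config (init_config :: cs) t.
Definition queue (cs : seq config) t := (cfg cs t).1.

Section AcceptingComputation.

Variables (w : seq sym) (cs : seq config).
Hypothesis acc : accepting_computation w cs.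

Lemma cfg_step t : t < size cs -> qstep w (cfg cs t) (cfg cs t.+1).
Proof. by case/andP: acc => /(pathP init_config) step _; apply: step. Qed.

Lemma cfg_time t : t <= size cs -> (cfg cs t).2 = t.
Proof.
elim: t => [|t IH] // tcs; have := cfg_step tcs.
case: (cfg cs t) (IH (ltnW tcs)) => Qt n /= ->.
case: (cfg cs t.+1) => Qt' n' /andP [_ /orP [/eqP [_ ->] //|]].
by case: Qt => // j Q' /andP [_ /eqP [_ ->]].
Qed.

Lemma size_computation : size cs = size w.
Proof.
case/andP: acc => _ /eqP last_cs.
by rewrite -[LHS](cfg_time (leqnn _)) /cfg -last_nth last_cs.
Qed.

Lemma cfg_mem t : t <= size w -> cfg cs t \in init_config :: cs.
Proof. by rewrite -size_computation => t_le; apply: mem_nth. Qed.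

Lemma queue_end : queue cs (size w) = [::].
Proof. by case/andP: acc => _ /eqP; rewrite /queue /cfg -size_computation -last_nth => ->. Qed.

Lemma accepting_queue_step t : t < size w ->
  queue cs t.+1 = rcons (queue cs t) t \/ exists j Q',
    [/\ queue cs t = j :: Q', nth c1 w j = nth c1 w t & queue cs t.+1 = Q'].
Proof.
rewrite -size_computation => tcs; have := cfg_step tcs.
rewrite /queue; case: (cfg cs t) (cfg_time (ltnW tcs)) => Qt n /= ->.
case: (cfg cs t.+1) => Qt' n' /andP [_ /orP [/eqP [-> _] |]]; first by left.
by case: Qt => // j Q' /andP [/eqP sym_j /eqP [-> _]]; right; exists j, Q'.
Qed.

Lemma pushed_of_queued c p : c \in cs -> p \in c.1 -> pushed (queue cs) p.
Proof.
case/(nthP init_config) => i i_cs <- p_in.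
have i_w : i.+1 <= size w by rewrite -size_computation.
by have [] := mem_queue (erefl : queue cs 0 = [::]) accepting_queue_step i_w p_in.
Qed.

End AcceptingComputation.

Definition two_full_blocks (l : nat) (c : config) : Prop :=
  exists k1 k2, [/\ k1 < 2 * l, k2 < 2 * l, k1 <> k2 &
    (full_block c (xblock l k1) /\ full_block c (xblock l k2)) \/
    (full_block c (yblock l k1) /\ full_block c (yblock l k2))].

Section FirstTwoFactors.

Variables (L : nat) (cs : seq config).
Hypothesis acc : accepting_computation (Vword L.+1) cs.

Local Notation w := (Vword L.+1).
Local Notation N := (size (Vword L.+1)).
Local Notation Q := (queue cs).
Local Notation a := L.+1.*2.+2.
Local Notation step := (accepting_queue_step acc).

Lemma queue_one : Q 1 = [:: 0].
Proof.
have N_gt0 : 0 < N by rewrite size_Vword_S.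
by case: (step N_gt0) => [-> // | [j [Q' []]]].
Qed.

Lemma queue_first_factor : Q a = 0 :: iota 1 (a - 1).
Proof.
have a_N : 1 <= a <= N by rewrite size_Vword_S; lia.
rewrite (queue_blocked step a_N queue_one) ?queue_one // => p; rewrite mem_iota => p_lt.
by rewrite !nth_Vword_first // ?nth_vword0; [apply: nth_vword_neq_c1 | ]; lia.
Qed.

Lemma x_blocks_if_c1_pushed : pushed Q a -> two_full_blocks L.+1 (cfg cs (a + a)).
Proof.
move=> pa; have a_N : a < N by rewrite size_Vword_S; lia.
have Qa1 : Q a.+1 = 0 :: rcons (iota 1 (a - 1)) a.
  by rewrite (queue_push step a_N pa) queue_first_factor.
have aa_N : a.+1 <= a + a <= N by rewrite size_Vword_S; lia.
have Q2a : Q (a + a) = Q a.+1 ++ iota a.+1 (a + a - a.+1).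
  apply: (queue_blocked step aa_N Qa1) => p; rewrite mem_iota => p_lt.
  rewrite nth_Vword_second ?nth_Vword_first ?nth_vword0 //; last by lia.
  by apply: nth_vword_neq_c1; lia.
exists 0, 1; split; [lia | lia | by [] | left].
split=> p; rewrite ?xblock0 ?xblock1 mem_iota => p_lt; change (p \in Q (a + a));
  rewrite Q2a Qa1 mem_cat inE mem_rcons inE !mem_iota; lia.
Qed.

Lemma first_push_after_c1_matched : ~~ pushed Q a ->
    (exists2 p, a <= p < a + a & pushed Q p) ->
  exists q, [/\ a < q < a + a, pushed Q q & Q q = iota (q - a) (a - (q - a))].
Proof.
move=> pa [p p_lt pp]; have a_N : a < N by rewrite size_Vword_S; lia.
have Qa1 : Q a.+1 = iota 1 (a - 1).
  have [j [Q' [Qa _ ->]]] := queue_pop step a_N pa.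
  by move: Qa; rewrite queue_first_factor; case=> _ <-.
have ex_q : exists q, (a < q < a + a) && pushed Q q.
  exists p; rewrite pp andbT.
  by have [pa' | ] := eqVneq p a; [rewrite -pa' pp in pa | lia].
case: (ex_minnP ex_q) => q /andP [q_lt pq] q_min; exists q; split=> //.
have Qq : Q q = drop (q - a.+1) (Q a.+1).
  apply: (queue_only_pops step) => [|t t_lt]; first by rewrite size_Vword_S; lia.
  by apply/negP => pt; have := q_min t; rewrite pt andbT (_ : a < t < a + a); lia.
by rewrite Qq Qa1 drop_iota; congr iota; lia.
Qed.

Lemma y_blocks_if_x_pushed q : a < q <= a + L.+1 -> pushed Q q ->
  Q q = iota (q - a) (a - (q - a)) -> two_full_blocks L.+1 (cfg cs (a + a - 1)).
Proof.
move=> q_lt pq Qq; set k := L.+1 - (q - a).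
have q_N : q < N by rewrite size_Vword_S; lia.
have Qq1 : Q q.+1 = iota (q - a) (a - (q - a)) ++ [:: q].
  by rewrite (queue_push step q_N pq) Qq cats1.
have front : take k.+1 (Q q.+1) = iota (q - a) k.+1.
  by rewrite Qq1 takel_cat ?size_iota ?take_iota; [congr iota | ]; lia.
have front_x : {in iota (q - a) k.+1, forall p, nth c1 w p = sx}.
  by move=> p; rewrite mem_iota => p_lt; rewrite nth_Vword_first ?nth_vword_x //; lia.
have few_x : count_mem sx (map (nth c1 w) (iota q.+1 (a + a - 1 - q.+1))) <
             count_mem sx (map (nth c1 w) (take k.+1 (Q q.+1))).
  rewrite front (count_mem_map_all front_x) size_iota.
  rewrite (_ : a + a - 1 - q.+1 = k + L.+1) ?iotaD ?map_cat ?count_cat; last by lia.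
  rewrite (count_mem_map0 (X := iota (q.+1 + k) L.+1)) ?addn0.
    by apply: leq_ltn_trans (count_size _ _) _; rewrite size_map size_iota.
  by move=> p; rewrite mem_iota => p_lt; rewrite nth_Vword_second ?nth_vword_y //; lia.
have m_N : q.+1 <= a + a - 1 <= N by rewrite size_Vword_S; lia.
have k_Q : k < size (Q q.+1) by rewrite Qq1 size_cat size_iota /=; lia.
have [d d_k [Qm pushed_y]] := queue_window step m_N k_Q few_x.
exists 0, 1; split; [lia | lia | by [] | right].
split=> p; rewrite ?yblock0 ?yblock1 mem_iota => p_lt; change (p \in Q (a + a - 1));
  rewrite Qm mem_cat; apply/orP.
  left; rewrite Qq1 drop_cat size_iota ifT; last by lia.
  by rewrite drop_iota mem_cat mem_iota; apply/orP; left; lia.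
right; rewrite mem_filter mem_iota; apply/andP; split; last by lia.
apply: pushed_y; first by lia.
rewrite front; apply/negP => /mapP [i /front_x ->].
by rewrite nth_Vword_second ?nth_vword_y //; lia.
Qed.

Lemma c2_queued_if_y_pushed q : a + L.+1 < q < a + a - 1 -> pushed Q q ->
  Q q = iota (q - a) (a - (q - a)) ->
  pushed Q (a + a - 1) /\ L.+1.*2.+1 \in Q (a + a - 1).
Proof.
move=> q_lt pq Qq; set k := L.+1.*2 - (q - a).
have q_N : q < N by rewrite size_Vword_S; lia.
have Qq1 : Q q.+1 = iota (q - a) (a - (q - a)) ++ [:: q].
  by rewrite (queue_push step q_N pq) Qq cats1.
have front : take k.+1 (Q q.+1) = iota (q - a) k.+1.
  by rewrite Qq1 takel_cat ?size_iota ?take_iota; [congr iota | ]; lia.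
have front_y : {in iota (q - a) k.+1, forall p, nth c1 w p = sy}.
  by move=> p; rewrite mem_iota => p_lt; rewrite nth_Vword_first ?nth_vword_y //; lia.
have few_y : count_mem sy (map (nth c1 w) (iota q.+1 (a + a - 1 - q.+1))) <
             count_mem sy (map (nth c1 w) (take k.+1 (Q q.+1))).
  rewrite front (count_mem_map_all front_y) size_iota.
  by apply: leq_ltn_trans (count_size _ _) _; rewrite size_map size_iota; lia.
have m_N : q.+1 <= a + a - 1 <= N by rewrite size_Vword_S; lia.
have k_Q : k < size (Q q.+1) by rewrite Qq1 size_cat size_iota /=; lia.
have [d d_k [Qm _]] := queue_window step m_N k_Q few_y.
have d_Q : d < size (Q q.+1) by lia.
have head_d : nth 0 (Q q.+1) d = q - a + d.
  by rewrite Qq1 nth_cat size_iota ifT ?nth_iota //; lia.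
split.
  have c2_N : a + a - 1 < N by rewrite size_Vword_S; lia.
  apply: contraT => pc; have [j [Q' [Qj sym_j _]]] := queue_pop step c2_N pc.
  move: Qj sym_j; rewrite Qm (drop_nth 0 d_Q) head_d; case=> <- _.
  rewrite nth_Vword_first ?(nth_vword_y (p := q - a + d)) //; try lia.
  rewrite nth_Vword_second //; last by lia.
  by rewrite (_ : a + a - 1 - a = L.+1.*2.+1) ?nth_vword_c2 //; lia.
rewrite Qm mem_cat Qq1 drop_cat size_iota ifT; last by lia.
by rewrite drop_iota !mem_cat mem_iota; apply/orP; left; apply/orP; left; lia.
Qed.

Lemma no_x_queued q : a + L.+1 < q < a + a -> Q q = iota (q - a) (a - (q - a)) ->
  {in Q (a + a), forall p, nth c1 w p != sx}.
Proof.
move=> q_lt Qq p p_in; have aa_N : a + a <= N by rewrite size_Vword_S; lia.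
have [p_lt _] := mem_queue (erefl : Q 0 = [::]) step aa_N p_in.
have [p_q | q_p] := ltnP p q.
  have p_q_aa : p < q <= a + a by lia.
  move: (mem_queue_earlier step p_q_aa aa_N p_in); rewrite Qq mem_iota => p_lt'.
  by rewrite nth_Vword_first //; [apply: nth_vword_neq_x; apply/orP; right | ]; lia.
by rewrite nth_Vword_second //; [apply: nth_vword_neq_x; apply/orP; right | ]; lia.
Qed.

Lemma c2_queued_twice q : a + L.+1 < q < a + a -> pushed Q q ->
    Q q = iota (q - a) (a - (q - a)) ->
  exists2 Q', Q (a + a) = rcons Q' (a + a - 1) & L.+1.*2.+1 \in Q'.
Proof.
move=> q_lt pq Qq.
have [c2_pushed c2_in] : pushed Q (a + a - 1) /\ L.+1.*2.+1 \in Q (a + a - 1).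
  have [q_last | q_lt'] := eqVneq q (a + a - 1).
    by rewrite -q_last Qq mem_iota; split=> //; lia.
  by apply: c2_queued_if_y_pushed pq Qq; lia.
exists (Q (a + a - 1)) => //.
have c2_N : a + a - 1 < N by rewrite size_Vword_S; lia.
by rewrite -(queue_push step c2_N c2_pushed); congr (queue cs); lia.
Qed.

Lemma one_c2_in_next_factors : 0 < L ->
  count_mem c2 (map (nth c1 w) (iota (a + a) (L.*2.+2 + L.+1))) <= 1.
Proof.
move=> L_gt0; rewrite (_ : L.*2.+2 = L.*2.+1 + 1); last by rewrite addn1.
rewrite !iotaD !map_cat !count_cat.
rewrite (count_mem_map0 (X := iota (a + a) L.*2.+1))
  ?(count_mem_map0 (X := iota (a + a + (L.*2.+1 + 1)) L.+1)).
- by rewrite add0n addn0; apply: leq_trans (count_size _ _) _; rewrite size_map size_iota.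
- move=> p; rewrite mem_iota => p_lt; rewrite nth_Vword_rest; last by lia.
  by rewrite nth_Vword_second //; [apply: nth_vword_neq_c2 | ]; lia.
move=> p; rewrite mem_iota => p_lt; rewrite nth_Vword_rest; last by lia.
by rewrite nth_Vword_first //; [apply: nth_vword_neq_c2 | ]; lia.
Qed.

Lemma x_blocks_of_next_factors Q' : Q (a + a) = rcons Q' (a + a - 1) ->
    L.+1.*2.+1 \in Q' -> {in Q (a + a), forall p, nth c1 w p != sx} ->
  exists2 t, t <= N & two_full_blocks L.+1 (cfg cs t).
Proof.
move=> Q2a c2_in no_x; have [L0 | L_gt0] := posnP L.
  have N_aa : N = a + a by rewrite size_Vword_S L0 /Vword.
  by move: (queue_end acc); rewrite N_aa Q2a => /eqP; rewrite -size_eq0 size_rcons.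
set t := a + a + L.*2.+2 + L.+1.
have t_N : a + a <= t <= N.
  have [L' EL] : exists L', L = L'.+1 by exists L.-1; lia.
  by rewrite size_Vword_S EL size_Vword_S; lia.
have front : take (size Q').+1 (Q (a + a)) = Q (a + a).
  by rewrite Q2a take_oversize // size_rcons.
have few_c2 : count_mem c2 (map (nth c1 w) (iota (a + a) (t - (a + a)))) <
              count_mem c2 (map (nth c1 w) (take (size Q').+1 (Q (a + a)))).
  have c2_Q' : 0 < count_mem c2 (map (nth c1 w) Q').
    rewrite -has_count; apply/hasP; exists c2 => //; apply/mapP; exists L.+1.*2.+1 => //.
    by rewrite nth_Vword_first ?nth_vword_c2 //; lia.
  have last_c2 : nth c1 w (a + a - 1) = c2.
    rewrite nth_Vword_second //; last by lia.
    by rewrite (_ : a + a - 1 - a = L.+1.*2.+1) ?nth_vword_c2 //; lia.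
  rewrite front Q2a map_rcons -cats1 count_cat /= last_c2 eqxx addn1 ltnS.
  apply: leq_trans c2_Q'; rewrite (_ : t - (a + a) = L.*2.+2 + L.+1); last by lia.
  exact: one_c2_in_next_factors.
have Q'_Q : size Q' < size (Q (a + a)) by rewrite Q2a size_rcons.
have [d d_Q [Qt pushed_new]] := queue_window step t_N Q'_Q few_c2.
have pushed_x p : a + a <= p < t -> nth c1 w p = sx -> p \in Q t.
  move=> p_lt p_x; rewrite Qt mem_cat mem_filter mem_iota; apply/orP; right.
  apply/andP; split; last by lia.
  apply: pushed_new; first by lia.
  by rewrite front; apply/negP => /mapP [i /no_x i_nx p_i]; rewrite -p_i p_x eqxx in i_nx.
exists t; first by lia.
exists 2, 3; split; [lia | lia | by [] | left].
split=> p; rewrite ?xblock2 ?xblock3 mem_iota => p_lt; apply: pushed_x; try lia;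
  rewrite nth_Vword_rest; try lia.
  by rewrite nth_Vword_first ?nth_vword_x //; lia.
by rewrite nth_Vword_second ?nth_vword_x //; lia.
Qed.

Lemma two_full_blocks_reached : (exists2 p, a <= p < a + a & pushed Q p) ->
  exists2 t, t <= N & two_full_blocks L.+1 (cfg cs t).
Proof.
move=> second_pushed.
have [pa | pa] := boolP (pushed Q a).
  by exists (a + a); [rewrite size_Vword_S; lia | exact: x_blocks_if_c1_pushed].
have [q [q_lt pq Qq]] := first_push_after_c1_matched pa second_pushed.
have [q_x | q_y] := leqP q (a + L.+1).
  exists (a + a - 1); first by rewrite size_Vword_S; lia.
  by apply: y_blocks_if_x_pushed pq Qq; lia.
have q_range : a + L.+1 < q < a + a by lia.
have [Q' Q2a c2_in] := c2_queued_twice q_range pq Qq.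
exact: x_blocks_of_next_factors Q2a c2_in (no_x_queued q_range Qq).
Qed.

End FirstTwoFactors.

Unset Implicit Arguments.

Theorem lemma11 (l : nat) (cs : seq config) :
  1 <= l ->
  accepting_computation (Vword l) cs ->
  (exists2 c, c \in cs &
     exists2 p, foff l 1 <= p < foff l 2 & p \in c.1) ->
  exists2 c, c \in init_config :: cs &
    exists k1 k2, [/\ k1 < (2 * l)%N, k2 < (2 * l)%N, k1 <> k2 &
      (full_block c (xblock l k1) /\ full_block c (xblock l k2)) \/
      (full_block c (yblock l k1) /\ full_block c (yblock l k2))].
Proof.
case: l => [//|L] _ acc [c c_in [p p_range p_in]].
rewrite foff1 foff2 in p_range.
have p_pushed := pushed_of_queued acc c_in p_in.
have [t t_N reached] := two_full_blocks_reached acc (ex_intro2 _ _ p p_range p_pushed).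
by exists (cfg cs t); [exact (cfg_mem acc t_N) | exact: reached].
Qed.
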